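(* Let $f:[0,1]\to\mathbb{R}$ with $f(0),f(1)\in\mathbb{Z}$, and let $n\in\mathbb{N}_+$. Set, for $x\in[0,1]$, \[ \varphi_n(x):=(n+1)\int_0^1 t(1-t)^{n(1-x)}\frac{(1-t)^{nx-1}-t^{nx-1}}{1-2t}\,dt. \] (a) If $f(x)-\varphi_n(x)$ is monotone increasing on $[0,1]$, then $\widetilde{B}_n(f)$ and $\widehat{B}_n(f)$ are monotone increasing on $[0,1]$. (b) If $f(x)+\varphi_n(x)$ is monotone decreasing on $[0,1]$, then $\widetilde{B}_n(f)$ and $\widehat{B}_n(f)$ are monotone decreasing on $[0,1]$.
   Context: For $n\in\mathbb{N}_+$ and $f:[0,1]\to\mathbb{R}$, define $\widetilde{B}_n(f)(x):=\sum_{k=0}^n \left[f\left(\frac{k}{n}\right)\binom{n}{k}\right]x^k(1-x)^{n-k}$, where $[\alpha]$ is the largest integer $\le\alpha$, and $\widehat{B}_n(f)(x):=\sum_{k=0}^n \left\langle f\left(\frac{k}{n}\right)\binom{n}{k}\right\rangle x^k(1-x)^{n-k}$, where $\langle\alpha\rangle$ is the integer nearest to $\alpha$ (when $\alpha$ is a half-integer, $\langle\alpha\rangle$ may be either neighbouring integer, chosen arbitrarily; the result holds for any such choice). Monotone increasing/decreasing are meant in the non-strict sense. *)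

From HB Require Import structures.
From mathcomp Require Import all_boot all_order all_algebra.
From mathcomp Require Import all_classical all_reals all_analysis.
Set Implicit Arguments. Unset Strict Implicit. Unset Printing Implicit Defensive.
Import Order.TTheory GRing.Theory Num.Theory.
Local Open Scope ring_scope.

Definition intBern (R : realType) (n : nat) (c : nat -> int) (x : R) : R :=
  \sum_(k < n.+1) (c k)%:~R * x ^+ k * (1 - x) ^+ (n - k).

Definition bcoef (R : realType) (f : R -> R) (n k : nat) : R :=
  f (k%:R / n%:R) * ('C(n, k))%:R.

Definition Btilde (R : realType) (f : R -> R) (n : nat) (x : R) : R :=
  intBern n (fun k => Num.floor (bcoef f n k)) x.

(* c is an admissible nearest-integer rounding of the coefficients of
   \widehat{B}_n(f) (ties resolved arbitrarily, possibly depending on k). *)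
Definition nearest_round (R : realType) (f : R -> R) (n : nat) (c : nat -> int) :=
  forall k, (k <= n)%N -> `| (c k)%:~R - bcoef f n k | <= 1 / 2 :> R.

Definition Bhat (R : realType) (n : nat) (c : nat -> int) (x : R) : R :=
  intBern n c x.

(* phi_n(x) = (n+1) \int_0^1 t (1-t)^{n(1-x)} ((1-t)^{nx-1} - t^{nx-1})/(1-2t) dt
   (Lebesgue integral over [0,1]; the integrand is bounded, the point t = 1/2
   is a removable singularity of measure zero). *)
Definition phi (R : realType) (n : nat) (x : R) : R :=
  (n.+1)%:R * Rintegral (@lebesgue_measure R) `[0%R, 1%R]%classic
    (fun t : R => t * (1 - t) `^ (n%:R * (1 - x))
       * (((1 - t) `^ (n%:R * x - 1) - t `^ (n%:R * x - 1)) / (1 - 2 * t))).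

Definition incr_on01 (R : realType) (g : R -> R) :=
  forall x y : R, 0 <= x -> x <= y -> y <= 1 -> g x <= g y.

Definition decr_on01 (R : realType) (g : R -> R) :=
  forall x y : R, 0 <= x -> x <= y -> y <= 1 -> g y <= g x.

From HB Require Import structures.
From mathcomp Require Import all_boot all_order all_algebra.
From mathcomp Require Import all_classical all_reals all_analysis.
From mathcomp Require Import measurable_realfun.
From mathcomp Require Import ring lra.
Import Order.TTheory GRing.Theory Num.Theory.
Import numFieldTopology.Exports numFieldNormedType.Exports.
Local Open Scope ring_scope.
Local Open Scope classical_set_scope.

(* Writing a_k := c_k / C(n, k), the polynomial \sum_k c_k x^k (1 - x)^(n - k) is
   the Bernstein polynomial \sum_k a_k C(n, k) x^k (1 - x)^(n - k), which is
   nondecreasing on [0, 1] as soon as the a_k are.  Both roundings satisfy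
   |c_k - f(k/n) C(n, k)| <= 1, i.e. |a_k - f(k/n)| <= 1 / C(n, k).  At x = k/n
   the integrand of phi_n is a polynomial in t, and Beta integrals give
   phi_n((k+1)/n) - phi_n(k/n) = 1 / C(n, k) + 1 / C(n, k+1); so if f - phi_n is
   nondecreasing, then a_k <= a_(k+1).  The decreasing case is the increasing
   one applied to -f and -c. *)

Section Bernstein.
Variable R : comNzRingType.

Definition bernstein (n : nat) (a : nat -> R) (x : R) : R :=
  \sum_(k < n.+1) a k * 'C(n, k)%:R * x ^+ k * (1 - x) ^+ (n - k).

Lemma bernsteinS n a x : bernstein n.+1 a x =
  (1 - x) * bernstein n a x + x * bernstein n (fun k => a k.+1) x.
Proof.
rewrite /bernstein big_ord_recl /= subn0 bin0.
under eq_bigr => i _ do rewrite /bump /= add1n binS natrD subSS mulrDr !mulrDl.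
rewrite big_split /= addrA; congr (_ + _).
  rewrite big_ord_recr /= (@bin_small n n.+1) // !(mulr0, mul0r) addr0.
  rewrite [in RHS]big_ord_recl /= subn0 bin0 mulrDr.
  congr (_ + _); first by rewrite exprS; ring.
  rewrite mulr_sumr; apply: eq_bigr => i _.
  rewrite /bump /= add1n -(subnSK (ltn_ord i)) [(1 - x) ^+ _.+1]exprS; ring.
by rewrite mulr_sumr; apply: eq_bigr => i _; rewrite [x ^+ _.+1]exprS; ring.
Qed.

End Bernstein.
Arguments bernstein {R}.

Section BernsteinMonotone.
Variable R : realFieldType.

Lemma ler_bernstein n (a b : nat -> R) x : 0 <= x <= 1 ->
  (forall k, (k <= n)%N -> a k <= b k) -> bernstein n a x <= bernstein n b x.
Proof.
move=> /andP[x0 x1] leab; apply: ler_sum => i _; rewrite -!mulrA ler_wpM2r //.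
  by rewrite !mulr_ge0 ?exprn_ge0 ?subr_ge0.
by rewrite leab // -ltnS.
Qed.

Lemma bernstein_nondecr n (a : nat -> R) :
  (forall k, (k < n)%N -> a k <= a k.+1) ->
  forall x y, 0 <= x -> x <= y -> y <= 1 -> bernstein n a x <= bernstein n a y.
Proof.
elim: n a => [|n IH] a le_a x y x0 xy y1.
  by rewrite /bernstein !big_ord_recl !big_ord0.
rewrite !bernsteinS; set P := bernstein n a; set Q := bernstein n (fun k => a k.+1).
have lePxy : P x <= P y by apply: IH => // k lt_kn; apply: le_a; exact: ltnW.
have leQxy : Q x <= Q y by apply: IH => // k lt_kn; exact: le_a.
have lePQx : P x <= Q x.
  by apply: ler_bernstein => [|k]; [rewrite x0 (le_trans xy y1) | apply: le_a].
have -> : (1 - y) * P y + y * Q y = (1 - x) * P x + x * Q x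
    + ((1 - y) * (P y - P x) + y * (Q y - Q x) + (y - x) * (Q x - P x)) by ring.
by rewrite lerDl; apply: addr_ge0; first apply: addr_ge0; apply: mulr_ge0; lra.
Qed.

End BernsteinMonotone.

Lemma natr_inv_binom (R : numFieldType) n k : (k <= n)%N ->
  'C(n, k)%:R^-1 = (k`! * (n - k)`!)%:R / n`!%:R :> R.
Proof.
by move=> le_kn; rewrite -(bin_fact le_kn) (natrM _ 'C(n, k)) invfM mulrCA divff ?mulr1.
Qed.

Lemma sum_inv_binom (R : numFieldType) k p :
  (k + p).+2%:R * (k`! * p`!)%:R / (k + p).+1`!%:R =
  'C((k + p).+1, k)%:R^-1 + 'C((k + p).+1, k.+1)%:R^-1 :> R.
Proof.
rewrite !natr_inv_binom ?ltnS ?leqW ?leq_addr // subSn ?leq_addr // subSS addKn.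
have -> : (k + p).+2 = (k.+1 + p.+1)%N by rewrite addSn addnS.
by rewrite !factS !natrM natrD; ring.
Qed.

Section PhiIncrement.
Variable R : realType.
Notation mu := (@lebesgue_measure R).

Definition phi_integrand (n : nat) (x t : R) : R :=
  t * (1 - t) `^ (n%:R * (1 - x))
    * (((1 - t) `^ (n%:R * x - 1) - t `^ (n%:R * x - 1)) / (1 - 2 * t)).

Lemma phiE n x : phi n x = n.+1%:R * \int[mu]_(t in `[0, 1]) phi_integrand n x t.
Proof. by []. Qed.

Definition phi_poly (m k : nat) (t : R) : R :=
  \sum_(i < k) XMonemX i (m - i) t - XMonemX 0 m t.

Lemma phi_polyS m k t : phi_poly m k.+1 t = phi_poly m k t + XMonemX k (m - k) t.
Proof. by rewrite /phi_poly big_ord_recr /=; ring. Qed.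

Lemma phi_poly_geometric j p t : (1 - 2 * t) * phi_poly (j + p) j.+1 t =
  t * (1 - t) ^+ p * ((1 - t) ^+ j - t ^+ j).
Proof.
elim: j p => [|j IH] p.
  by rewrite /phi_poly big_ord_recr big_ord0 /= /XMonemX /unstable.onem !subn0 add0n; ring.
rewrite phi_polyS mulrDr addSnnS IH -addSnnS addKn /XMonemX /unstable.onem !exprS; ring.
Qed.

Lemma phi_integrand_poly m k t : (k <= m.+1)%N -> 0 < t < 1 -> t != 2^-1 ->
  phi_integrand m.+1 (k%:R / m.+1%:R) t = phi_poly m k t.
Proof.
move=> le_km /andP[t_gt0 t_lt1] t_neq_half.
have m1_neq0 : m.+1%:R != 0 :> R by rewrite pnatr_eq0.
have onem2t_neq0 : 1 - 2 * t != 0.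
  by apply: contra t_neq_half; rewrite subr_eq0 => /eqP e; apply/eqP; lra.
have t_neq0 : t != 0 by rewrite gt_eqF.
have onemt_neq0 : 1 - t != 0 by rewrite subr_eq0 gt_eqF.
have mkE : m.+1%:R * (k%:R / m.+1%:R) = k%:R :> R by rewrite mulrCA divff ?mulr1.
rewrite /phi_integrand mulrBr mulr1 mkE -natrB //.
case: k {mkE} le_km => [|j] le_jm.
  rewrite sub0r subn0 !powR_inv1 ?subr_ge0 ?ltW // powR_mulrn ?subr_ge0 ?ltW //.
  rewrite /phi_poly big_ord0 /XMonemX /unstable.onem expr0 mul1r sub0r exprS.
  by field; rewrite t_neq0 onemt_neq0 onem2t_neq0.
rewrite -natr1 addrK subSS !powR_mulrn ?subr_ge0 ?ltW //.
rewrite -[phi_poly _ _ _](mulKf onem2t_neq0) -(subnKC (le_jm : (j <= m)%N)).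
by rewrite phi_poly_geometric addKn; field.
Qed.

Lemma measurable_invr : measurable_fun [set: R] (@GRing.inv R).
Proof.
have -> : @GRing.inv R = fun x => if x == 0 then 0 else x^-1.
  by apply/funext => x; case: eqP => // ->; rewrite invr0.
apply: measurable_fun_if => //; first exact: measurable_fun_eqr.
apply: (@measurable_funS _ _ _ _ [set x : R | x != 0]).
- by apply: open_measurable; exact: open_neq.
- by move=> x [_ /= ->].
- apply: open_continuous_measurable_fun; first exact: open_neq.
  by move=> x; rewrite inE => x_neq0; exact: inv_continuous.
Qed.

Lemma measurable_phi_integrand n x : measurable_fun [set: R] (phi_integrand n x).
Proof.
have measurable_onem : measurable_fun [set: R] (fun t => 1 - t) by exact: measurable_funB.
apply: measurable_funM; first apply: measurable_funM => //.
- exact: measurableT_comp (measurable_powR _) measurable_onem.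
apply: measurable_funM; first apply: measurable_funB.
- exact: measurableT_comp (measurable_powR _) measurable_onem.
- exact: measurable_powR.
- by apply: measurableT_comp measurable_invr _; exact: measurable_funB.
Qed.

Lemma continuous_phi_poly m k : continuous (phi_poly m k).
Proof.
elim: k => [|k IH] t.
  rewrite (_ : phi_poly m 0 = cst 0 \- XMonemX 0 m); last first.
    by apply/funext => s; rewrite /phi_poly big_ord0.
  by apply: continuousB; [exact: cst_continuous | exact: continuous_XMonemX].
rewrite (_ : phi_poly m k.+1 = phi_poly m k \+ XMonemX k (m - k)); last first.
  by apply/funext => s; rewrite phi_polyS.
by apply: continuousD; [exact: IH | exact: continuous_XMonemX].
Qed.

Lemma Rintegral_phi_integrand m k : (k <= m.+1)%N ->
  \int[mu]_(t in `[0, 1]) phi_integrand m.+1 (k%:R / m.+1%:R) t =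
  \int[mu]_(t in `[0, 1]) phi_poly m k t.
Proof.
move=> le_km; congr fine; apply: ae_eq_integral => //.
- by apply/measurable_EFinP; apply: measurable_funS (measurable_phi_integrand _ _).
- apply/measurable_EFinP; apply: measurable_funS (continuous_measurable_fun _) => //.
  exact: continuous_phi_poly.
(* The two functions may differ only at t = 0, 1/2, 1 (where x / 0 = 0). *)
have negligible1 (r : R) : mu.-negligible [set r].
  by apply/negligibleP => //; exact: lebesgue_measure_set1.
apply: negligibleS (negligibleU (negligibleU (negligible1 0) (negligible1 2^-1)) (negligible1 1)).
move=> t /=; apply: contra_notP => not_special; rewrite in_itv /= => /andP[].
rewrite le_eqVlt => /orP[/eqP t0|t_gt0]; first by case: not_special; left; left.
rewrite le_eqVlt => /orP[/eqP t1|t_lt1]; first by case: not_special; right.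
have [t_half|t_neq_half] := eqVneq t 2^-1; first by case: not_special; left; right.
by rewrite phi_integrand_poly // t_gt0 t_lt1.
Qed.

Lemma Rintegral_phi_polyS k p :
  \int[mu]_(t in `[0, 1]) phi_poly (k + p) k.+1 t
    - \int[mu]_(t in `[0, 1]) phi_poly (k + p) k t
  = (k`! * p`!)%:R / (k + p).+1`!%:R.
Proof.
have integrable_phi_poly m j : mu.-integrable `[0, 1] (EFin \o phi_poly m j).
  apply: continuous_compact_integrable; first exact: segment_compact.
  by apply: continuous_in_subspaceT => t _; exact: continuous_phi_poly.
under eq_Rintegral do rewrite phi_polyS.
rewrite RintegralD //; last exact: integrable_XMonemX.
rewrite addrAC subrr add0r addKn -(beta_fun_fact (R := R)) /beta_fun.
by rewrite -Rintegral_mkcond.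
Qed.

Lemma phi_increment n k : (k < n)%N ->
  phi n (k.+1%:R / n%:R) - phi n (k%:R / n%:R) =
  'C(n, k)%:R^-1 + 'C(n, k.+1)%:R^-1 :> R.
Proof.
move=> lt_kn; rewrite -(subnKC lt_kn) addSn; set p := (n - k.+1)%N.
rewrite !phiE !Rintegral_phi_integrand ?ltnS ?leq_addr ?leqW ?leq_addr //.
by rewrite -mulrBr Rintegral_phi_polyS mulrA sum_inv_binom.
Qed.

End PhiIncrement.

Lemma ler_dist_divr (R : realFieldType) (a y C : R) : 0 < C ->
  `|a - y * C| <= 1 -> `|a / C - y| <= C^-1.
Proof.
move=> C_gt0 near_a; rewrite -[y](mulfK (lt0r_neq0 C_gt0)) -mulrBl normrM.
by rewrite normfV (gtr0_norm C_gt0) -[leRHS]mul1r ler_wpM2r // invr_ge0 ltW.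
Qed.

Section IntBernstein.
Variables (R : realType) (f : R -> R) (n : nat) (c : nat -> int).
Hypothesis c_near : forall k, (k <= n)%N -> `|(c k)%:~R - bcoef f n k| <= 1 :> R.

Let a k : R := (c k)%:~R / 'C(n, k)%:R.

Lemma intBern_bernstein x : intBern n c x = bernstein n a x.
Proof.
rewrite /intBern /bernstein; apply: eq_bigr => k _.
by rewrite /a divfK // pnatr_eq0 -lt0n bin_gt0 -ltnS.
Qed.

Lemma intBern_nondecr : incr_on01 (fun x => f x - phi n x) -> incr_on01 (@intBern R n c).
Proof.
move=> incr_f x y x0 xy y1; rewrite !intBern_bernstein.
apply: bernstein_nondecr => // k lt_kn.
have n_gt0 : 0 < n%:R :> R by rewrite ltr0n (leq_ltn_trans _ lt_kn).
have a_near j : (j <= n)%N -> `|a j - f (j%:R / n%:R)| <= 'C(n, j)%:R^-1.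
  by move=> le_jn; apply: ler_dist_divr; [rewrite ltr0n bin_gt0 | exact: c_near].
have f_step : f (k%:R / n%:R) - phi n (k%:R / n%:R)
    <= f (k.+1%:R / n%:R) - phi n (k.+1%:R / n%:R).
  by apply: incr_f; rewrite ?divr_ge0 ?ler_pM2r ?invr_gt0 ?ler_pdivrMr ?mul1r ?ler_nat.
have := @phi_increment R n k lt_kn.
have := a_near k (ltnW lt_kn); have := a_near k.+1 lt_kn; rewrite !ler_norml.
lra.
Qed.

End IntBernstein.

Lemma intBernN (R : realType) n (c : nat -> int) (x : R) :
  intBern n (fun k => - c k) x = - intBern n c x.
Proof. by rewrite /intBern -sumrN; apply: eq_bigr => k _; rewrite mulrNz !mulNr. Qed.

Lemma intBern_nonincr (R : realType) (f : R -> R) n (c : nat -> int) :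
  (forall k, (k <= n)%N -> `|(c k)%:~R - bcoef f n k| <= 1 :> R) ->
  decr_on01 (fun x => f x + phi n x) -> decr_on01 (@intBern R n c).
Proof.
move=> c_near decr_f x y x0 xy y1; rewrite -lerN2 -!intBernN.
apply: (@intBern_nondecr R (fun x => - f x)) => // [k le_kn|u v u0 uv v1].
  by rewrite /bcoef mulrNz mulNr -opprD normrN c_near.
by have := decr_f u v u0 uv v1; lra.
Qed.

Lemma floor_dist_le1 {R : realType} (y : R) : `|(Num.floor y)%:~R - y| <= 1.
Proof.
have := floor_le y; have := floorD1_gt y; rewrite rmorphD /= ler_norml; lra.
Qed.

Lemma nearest_round_dist_le1 (R : realType) (f : R -> R) n (c : nat -> int) :
  nearest_round f n c -> forall k, (k <= n)%N -> `|(c k)%:~R - bcoef f n k| <= 1 :> R.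
Proof. by move=> c_round k /c_round /le_trans; apply; lra. Qed.

Theorem theorem1p8 (R : realType) (f : R -> R) (n : nat) :
  (0 < n)%N ->
  f 0 \is a Num.int -> f 1 \is a Num.int ->
  (incr_on01 (fun x => f x - phi n x) ->
     incr_on01 (Btilde f n) /\
     (forall c : nat -> int, nearest_round f n c -> incr_on01 (@Bhat R n c))) /\
  (decr_on01 (fun x => f x + phi n x) ->
     decr_on01 (Btilde f n) /\
     (forall c : nat -> int, nearest_round f n c -> decr_on01 (@Bhat R n c))).
Proof.
move=> _ _ _.
have floor_near k (_ : (k <= n)%N) := floor_dist_le1 (bcoef f n k).
split=> [incr_f | decr_f]; split.
- exact: intBern_nondecr floor_near incr_f.
- by move=> c /nearest_round_dist_le1 c_near; exact: intBern_nondecr c_near incr_f.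
- exact: intBern_nonincr floor_near decr_f.
- by move=> c /nearest_round_dist_le1 c_near; exact: intBern_nonincr c_near decr_f.
Qed.
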